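(* Let $G$ be a graph, $h\geq 3$ a constant, $\Lambda>0$, and let $Y>0$ be any value (possibly depending on $n,h,\Lambda$). Fix a vertex $v$ with $t_G(v)\leq \Lambda/Y$ and a vector $P\in\mathsf{Product}_h(\Lambda)$. Then $v[P]\leq \frac{q}{Y}$, where $q=\frac{h!}{h^h}$.
   Context: An $h$-cycle is a cycle on $h$ distinct vertices; $t_G(v)$ is the number of $h$-cycles of $G$ containing $v$. Logarithms are base 2. $\mathsf{Product}_h(\Lambda)$ is the set of vectors $(p_1,\dots,p_h)\in[0,1]^h$ such that each $p_i\in\{2^{-j}: j \text{ an integer}, 0\leq j\leq \log(\Lambda)+1\}$ and $\prod_{i=1}^h p_i\leq 1/\Lambda$. For $P=(p_1,\dots,p_h)$, the $P$-discovery experiment is: sample a uniformly random coloring $\varphi:V(G)\to[h]$, keep each vertex of color class $i$ independently with probability $p_i$, and let $F$ be the induced subgraph on kept vertices; $v$ is $P$-discovered if $v$ lies on an $h$-cycle of $F$ whose vertices receive $h$ distinct colors. $v[P]$ is the probability that $v$ is $P$-discovered. *)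

From HB Require Import structures.
From mathcomp Require Import all_boot all_order all_algebra.
From mathcomp Require Import reals exp.
Set Implicit Arguments. Unset Strict Implicit. Unset Printing Implicit Defensive.
Import Order.TTheory GRing.Theory Num.Theory.
Local Open Scope ring_scope.

Section Defs.
Variables (V : finType) (G : rel V) (h : nat).

Definition simple_graph := symmetric G /\ irreflexive G.

Definition hcycles : {set {set {set V}}} :=
  [set E : {set {set V}} | [exists f : {ffun 'I_h -> V},
      [&& injectiveb f, [forall i, G (f i) (f (ordS i))]
        & E == [set [set f i; f (ordS i)] | i : 'I_h]]]].

Definition tG (v : V) : nat :=
  #|[set E in hcycles | v \in \bigcup_(e in E) e]|.

(* v is P-discovered for coloring phi and kept vertex set S:
   v lies on an h-cycle of F = G[S] whose vertices get h distinct colors *)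
Definition discovered (v : V) (phi : {ffun V -> 'I_h}) (S : {set V}) : bool :=
  [exists f : {ffun 'I_h -> V},
     [&& injectiveb f, v \in codom f, [forall i, f i \in S],
         [forall i, G (f i) (f (ordS i))]
       & injectiveb [ffun i => phi (f i)]]].

Variable R : realType.

Definition log2 (x : R) : R := ln x / ln 2.

Definition Product (Lambda : R) (P : {ffun 'I_h -> R}) : Prop :=
  (forall i, exists j : nat,
      P i = (2%:R ^+ j)^-1 /\ (j%:R <= log2 Lambda + 1)) /\
  \prod_(i < h) P i <= 1 / Lambda.

Definition discovery_prob (P : {ffun 'I_h -> R}) (v : V) : R :=
  \sum_(phi : {ffun V -> 'I_h}) \sum_(S : {set V})
    ((h ^ #|V|)%:R)^-1 *
    ((\prod_(x in S) P (phi x)) * (\prod_(x in ~: S) (1 - P (phi x)))) *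
    (discovered v phi S)%:R.

End Defs.

From HB Require Import structures.
From mathcomp Require Import all_boot all_order all_algebra.
From mathcomp Require Import reals exp.
From mathcomp Require Import ring.
Import Order.TTheory GRing.Theory Num.Theory.
Set Implicit Arguments. Unset Strict Implicit. Unset Printing Implicit Defensive.
Local Open Scope ring_scope.

(* If v is discovered, then some h-cycle through v has all its vertices kept
   and colored with h distinct colors. For a fixed cycle, the coloring is
   injective on its vertices with probability h!/h^h, and then the cycle
   carries each color exactly once, so it is kept with probability
   p_1 ... p_h <= 1/Lambda. The union bound over the t_G(v) <= Lambda/Y
   cycles through v gives v[P] <= (Lambda/Y) (h!/h^h) (1/Lambda). *)

Lemma sum_supsets_prod_weight (R : comPzRingType) (T : finType) (a : T -> R)
    (W : {set T}) :
  \sum_(S : {set T}) (\prod_(x in S) a x * \prod_(x in ~: S) (1 - a x)) * (W \subset S)%:R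
  = \prod_(x in W) a x.
Proof.
have -> : \prod_(x in W) a x = \prod_x (a x + (if x \in W then 0 else 1 - a x)).
  rewrite big_mkcond; apply: eq_bigr => x _.
  by case: ifP => _; rewrite ?addr0 // addrC subrK.
rewrite bigA_distr; apply: eq_bigr => S _.
have [WS | /subsetPn[x xW xS]] := boolP (W \subset S); last first.
  by rewrite mulr0 (bigD1 x) //= (negbTE xS) xW mul0r.
rewrite mulr1 [RHS](bigID (mem S)) /=; congr (_ * _).
  by apply: eq_bigr => x ->.
apply: eq_big => [x | x]; first by rewrite inE.
by rewrite inE => /negbTE xS; rewrite xS; case: ifP => // /(subsetP WS); rewrite xS.
Qed.

Section FfunRestriction.
Variables (I J V : finType) (f : I -> V).
Hypothesis inj_f : injective f.

Lemma card_ffun_extensions (u : {ffun I -> J}) :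
  #|[set phi : {ffun V -> J} | [ffun i => phi (f i)] == u]| = (#|J| ^ (#|V| - #|I|))%N.
Proof.
pose A x : {set J} := [set j | [forall i, (f i == x) ==> (j == u i)]].
have -> : [set phi : {ffun V -> J} | [ffun i => phi (f i)] == u] = setXn A.
  apply/setP => phi; rewrite !inE; apply/eqP/forallP => [phiu x | phiA].
    rewrite inE; apply/forallP => i; apply/implyP => /eqP <-.
    by rewrite -phiu ffunE.
  apply/ffunP => i; rewrite ffunE; have := phiA (f i).
  by rewrite inE => /forallP/(_ i); rewrite eqxx => /eqP.
rewrite cardsXn (bigID (mem (codom f))) /= big1 => [|_ /codomP[i ->]]; last first.
  apply/eqP/cards1P; exists (u i); apply/setP => j; rewrite !inE.
  apply/forallP/eqP => [/(_ i)/implyP/(_ (eqxx _))/eqP // | -> k].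
  by apply/implyP => /eqP/inj_f ->.
rewrite mul1n (eq_bigr (fun=> #|J|)) => [|x fx]; last first.
  rewrite -cardsT; apply: eq_card => j; rewrite !inE.
  by apply/forallP => i; apply/implyP => /eqP fi; rewrite -fi codom_f in fx.
rewrite prod_nat_const -(cardC (mem (codom f))) (card_codom inj_f) addKn.
by congr (expn _ _); apply: eq_card.
Qed.

Lemma sum_ffun_comp (M : nmodType) (K : {ffun I -> J} -> M) :
  \sum_(phi : {ffun V -> J}) K [ffun i => phi (f i)]
  = (\sum_u K u) *+ (#|J| ^ (#|V| - #|I|)).
Proof.
rewrite (partition_big (fun phi : {ffun V -> J} => [ffun i => phi (f i)]) predT) //=.
rewrite -sumrMnl; apply: eq_bigr => u _.
rewrite (eq_bigr (fun=> K u)) => [|phi /eqP-> //].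
by rewrite sumr_const -(card_ffun_extensions u) cardsE.
Qed.

End FfunRestriction.

Lemma sum_injective_prod (R : comPzSemiRingType) (I : finType) (a : I -> R) :
  \sum_(u : {ffun I -> I} | injectiveb u) \prod_i a (u i) = (\prod_i a i) *+ #|I|`!.
Proof.
rewrite [LHS](eq_bigr (fun=> \prod_i a i)) => [|u /injectiveP inj_u]; last first.
  exact/esym/reindex_inj.
by rewrite sumr_const -ffactnn -card_inj_ffuns cardsE.
Qed.

Lemma cover_imset_edges (I T : finType) (f : I -> T) (s : I -> I) :
  cover [set [set f i; f (s i)] | i : I] = f @: setT.
Proof.
rewrite cover_imset; apply/setP => x; apply/bigcupP/imsetP => [[i _] | [i _ ->]].
  by case/set2P=> ->; [exists i | exists (s i)].
by exists i; rewrite ?set21.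
Qed.

Lemma imsetT_subset (I T : finType) (f : I -> T) (S : {set T}) :
  (f @: setT \subset S) = [forall i, f i \in S].
Proof.
apply/subsetP/forallP => [fS i | fS _ /imsetP[i _ ->] //].
by apply: fS; rewrite imset_f.
Qed.

Lemma dinjectiveb_imsetT (I T U : finType) (f : I -> T) (g : T -> U) :
  injective f -> dinjectiveb g (f @: setT) = injectiveb [ffun i => g (f i)].
Proof.
move=> inj_f; apply/dinjectiveP/injectiveP => [g_inj i j | gf_inj].
  by rewrite !ffunE => /g_inj; rewrite !imset_f // => /(_ isT isT)/inj_f.
move=> _ _ /imsetP[i _ ->] /imsetP[j _ ->].
by have := gf_inj i j; rewrite !ffunE => gfij /gfij ->.
Qed.

Section CycleDiscovery.
Variables (R : realType) (V : finType) (G : rel V) (h : nat).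

Lemma hcycle_cover E : E \in hcycles G h ->
  exists2 f : 'I_h -> V, injective f & cover E = f @: setT.
Proof.
rewrite inE => /existsP[f /and3P[/injectiveP inj_f _ /eqP->]].
by exists f; rewrite ?cover_imset_edges.
Qed.

Definition colorful_kept (phi : {ffun V -> 'I_h}) (S W : {set V}) :=
  (W \subset S) && dinjectiveb phi W.

Lemma discovered_colorful_kept v phi S : discovered G v phi S ->
  exists2 E, E \in [set E in hcycles G h | v \in cover E] & colorful_kept phi S (cover E).
Proof.
case/existsP=> f /and5P[inj_f /codomP[i ->] fS f_cyc phif_inj].
have cover_f := cover_imset_edges f (@ordS h).
exists [set [set f j; f (ordS j)] | j : 'I_h].
  rewrite !inE cover_f imset_f // andbT; apply/existsP; exists f.
  by rewrite inj_f f_cyc eqxx.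
rewrite cover_f /colorful_kept imsetT_subset dinjectiveb_imsetT ?fS //.
exact/injectiveP.
Qed.

Variable P : {ffun 'I_h -> R}.
Hypothesis P01 : forall i, 0 <= P i <= 1.

Definition outcome_prob (phi : {ffun V -> 'I_h}) (S : {set V}) : R :=
  ((h ^ #|V|)%:R)^-1 * (\prod_(x in S) P (phi x) * \prod_(x in ~: S) (1 - P (phi x))).

Lemma outcome_prob_ge0 phi S : 0 <= outcome_prob phi S.
Proof.
rewrite mulr_ge0 ?invr_ge0 ?ler0n ?mulr_ge0 ?prodr_ge0 // => x _;
  by have /andP[P0 P1] := P01 (phi x); rewrite ?subr_ge0.
Qed.

Lemma colorful_kept_prob_given_coloring phi (f : 'I_h -> V) : injective f ->
  \sum_S outcome_prob phi S * (colorful_kept phi S (f @: setT))%:R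
  = ((h ^ #|V|)%:R)^-1 *
    ((injectiveb [ffun i => phi (f i)])%:R * \prod_i P (phi (f i))).
Proof.
move=> inj_f; set W := f @: setT.
transitivity (((h ^ #|V|)%:R)^-1 * (dinjectiveb phi W)%:R * \sum_(S : {set V})
    (\prod_(x in S) P (phi x) * \prod_(x in ~: S) (1 - P (phi x))) * (W \subset S)%:R).
  rewrite mulr_sumr; apply: eq_bigr => S _.
  by rewrite /colorful_kept /outcome_prob -mulnb natrM; ring.
rewrite sum_supsets_prod_weight big_imset => [|i j _ _ /inj_f //].
rewrite dinjectiveb_imsetT // -mulrA; congr (_ * (_ * _)).
by apply: eq_bigl => i; rewrite inE.
Qed.

Lemma colorful_kept_prob (f : 'I_h -> V) : injective f -> (0 < h)%N ->
  \sum_phi \sum_S outcome_prob phi S * (colorful_kept phi S (f @: setT))%:R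
  = (h`!)%:R / (h ^ h)%:R * \prod_i P i.
Proof.
move=> inj_f h_gt0.
pose K (u : {ffun 'I_h -> 'I_h}) := (injectiveb u)%:R * \prod_i P (u i).
transitivity (((h ^ #|V|)%:R)^-1 * \sum_(phi : {ffun V -> 'I_h}) K [ffun i => phi (f i)]).
  rewrite mulr_sumr; apply: eq_bigr => phi _.
  rewrite colorful_kept_prob_given_coloring //; congr (_ * (_ * _)).
  by apply: eq_bigr => i _; rewrite ffunE.
rewrite (sum_ffun_comp inj_f K).
have -> : \sum_u K u = \sum_(u : {ffun 'I_h -> 'I_h} | injectiveb u) \prod_i P (u i).
  by rewrite [RHS]big_mkcond; apply: eq_bigr => u _; rewrite /K; case: injectiveb;
    rewrite ?mul1r ?mul0r.
have h_le_V : (h <= #|V|)%N by rewrite -[h in (h <= _)%N]card_ord; exact: leq_card inj_f.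
have -> : (h ^ #|V| = h ^ (#|V| - h) * h ^ h)%N by rewrite -expnD subnK.
rewrite sum_injective_prod !card_ord -mulrnA -[\prod_i P i *+ _]mulr_natr !natrM.
by field; rewrite !pnatr_eq0 -!lt0n !expn_gt0 h_gt0.
Qed.

Lemma discovery_prob_le_sum_cycles v :
  discovery_prob G P v <= \sum_(E in [set E in hcycles G h | v \in cover E])
    \sum_phi \sum_S outcome_prob phi S * (colorful_kept phi S (cover E))%:R.
Proof.
rewrite exchange_big; apply: ler_sum => phi _.
rewrite exchange_big; apply: ler_sum => S _.
rewrite -mulr_sumr ler_wpM2l ?outcome_prob_ge0 //.
have [/discovered_colorful_kept[E E_cyc E_kept] | _] := boolP (discovered G v phi S).
  by rewrite (bigD1 E) //= E_kept lerDl sumr_ge0.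
by rewrite sumr_ge0.
Qed.

End CycleDiscovery.

Lemma Product_ge0_le1 (R : realType) h (Lambda : R) (P : {ffun 'I_h -> R}) :
  Product Lambda P -> forall i, 0 <= P i <= 1.
Proof.
move=> [P_pow _] i; have [j [-> _]] := P_pow i.
by rewrite invr_ge0 exprn_ge0 ?invf_le1 ?exprn_gt0 ?exprn_ege1 ?ler1n.
Qed.

Theorem proposition3 (R : realType) (V : finType) (G : rel V) (h : nat)
  (Lambda Y : R) (v : V) (P : {ffun 'I_h -> R}) :
  simple_graph G -> (3 <= h)%N -> 0 < Lambda -> 0 < Y ->
  (tG G h v)%:R <= Lambda / Y ->
  Product Lambda P ->
  discovery_prob G P v <= (h`!)%:R / (h ^ h)%:R / Y.
Proof.
move=> _ h_ge3 Lambda_gt0 Y_gt0 tGv P_Product.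
have P01 := Product_ge0_le1 P_Product.
have [_ P_prod] := P_Product.
set q : R := (h`!)%:R / (h ^ h)%:R.
apply: le_trans (discovery_prob_le_sum_cycles G P01 v) _.
rewrite (eq_bigr (fun=> q * \prod_i P i)) => [|E]; last first.
  rewrite inE => /andP[/hcycle_cover[f inj_f ->] _].
  by apply: colorful_kept_prob => //; apply: leq_trans _ h_ge3.
rewrite sumr_const -[q * _ *+ _]mulr_natr -mulrA ler_wpM2l ?divr_ge0 ?ler0n //.
apply: le_trans (ler_pM _ _ P_prod tGv) _; rewrite ?ler0n //.
  by apply: prodr_ge0 => i _; case/andP: (P01 i).
by rewrite mul1r mulrA mulVf ?mul1r ?gt_eqF.
Qed.
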